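(* Let $d>0$, $k\ge1$, $i\ge0$. If $X$ is an $\omega^{2d+1}$-large finite set and $\min X>\max\{k,i,2\}$, then $X$ is $(\omega^d,k,i)$-persistent.
   Context: Strings are finite binary strings with $\preceq$ the initial-segment order; $2^i$ also denotes the set of strings of length $i$; a tree is a set of strings closed under initial segments; a leaf of a finite tree is a $\preceq$-maximal element. For finite $X=\{x_0<\dots<x_n\}$, a finite tree $T$ is $X$-quasistrong if $T\cap 2^{x_i}\ne\emptyset$ for all $i\le n$ and for each $i<n$ every $\sigma\in T\cap2^{x_i}$ has exactly two incompatible extensions in $T\cap 2^{x_{i+1}}$. Largeness: $X$ is $\omega$-large if $|X|>\min X$; $X$ is $\omega^d\cdot n$-large if it is the union of $n$ many $\omega^d$-large sets $X_0<\dots<X_{n-1}$ (where $A<B$ means $\max A<\min B$); $X$ is $\omega^{d+1}$-large if $X=\{\min X\}\cup X_1$ with $\min X_1>\min X$ and $X_1$ $\omega^d\cdot\min X$-large. Persistence ($d,m,k\ge1$, $\alpha=\omega^d\cdot m$, $X$ nonempty finite): $X$ is $(\alpha,k,0)$-persistent iff $\alpha$-large; for $i\ge1$, $X$ is $(\alpha,k,i)$-persistent iff $X$ contains an $(\alpha,k,i-1)$-persistent subset $Y$ such that for every $X$-quasistrong tree $T$ and every $C:T\cap 2^{\max X}\to k$ there exist $c<k$ and a $Y$-quasistrong finite tree $S\subseteq T$ all of whose leaves have extensions in $C^{-1}(c)$. *)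

From mathcomp Require Import all_boot.
From mathcomp Require Import finmap.

Set Implicit Arguments.
Unset Strict Implicit.
Unset Printing Implicit Defensive.

Local Open Scope fset_scope.

(* Binary strings are [seq bool]; the initial-segment order s ⪯ t is
   [prefix s t] from seq.v.  Finite sets of naturals are [{fset nat}],
   finite sets of strings are [{fset (seq bool)}]. *)

(* max of a finite set of naturals (0 on the empty set; only used on
   nonempty sets) *)
Definition fmax (X : {fset nat}) : nat := \max_(x <- enum_fset X) x.

Definition fset_lt (A B : {fset nat}) : Prop :=
  forall a b, a \in A -> b \in B -> a < b.

Definition omega_large (X : {fset nat}) : Prop :=
  exists m, [/\ m \in X, (forall x, x \in X -> m <= x) & m < #|` X|].

(* X is (P * n)-large : union of n sets X_0 < ... < X_{n-1}, each P-large
   (n = 0 : X is empty) *)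
Fixpoint times_large (P : {fset nat} -> Prop) (n : nat) (X : {fset nat}) : Prop :=
  match n with
  | 0 => X = fset0
  | n'.+1 => exists A B, [/\ P A, times_large P n' B, fset_lt A B & X = A `|` B]
  end.

(* large d X : X is omega^d-large (for d >= 1; d = 0, i.e. 1-large, is taken
   to mean nonempty, and is never used here). *)
Fixpoint large (d : nat) (X : {fset nat}) : Prop :=
  match d with
  | 0 => X != fset0
  | 1 => omega_large X
  | d'.+1 =>
      exists m X1, [/\ m \in X, (forall x, x \in X -> m <= x),
                     X = m |` X1, (forall x, x \in X1 -> m < x)
                   & times_large (large d') m X1]
  end.

Definition large_mul (d m : nat) (X : {fset nat}) : Prop :=
  times_large (large d) m X.

Definition is_tree (T : {fset (seq bool)}) : Prop :=
  forall s t, s \in T -> prefix t s -> t \in T.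

Definition is_leaf (S : {fset (seq bool)}) (s : seq bool) : Prop :=
  s \in S /\ (forall t, t \in S -> prefix s t -> t = s).

Definition quasistrong (X : {fset nat}) (T : {fset (seq bool)}) : Prop :=
  [/\ is_tree T,
      (forall x, x \in X -> exists s, s \in T /\ size s = x)
    & (forall x y, x \in X -> y \in X -> x < y ->
         (forall z, z \in X -> ~ (x < z /\ z < y)) ->
         forall s, s \in T -> size s = x ->
         exists t1 t2,
           [/\ [/\ t1 \in T, t2 \in T, size t1 = y & size t2 = y],
               prefix s t1, prefix s t2,
               (~~ prefix t1 t2 /\ ~~ prefix t2 t1)
             & forall t, t \in T -> size t = y -> prefix s t ->
                 t = t1 \/ t = t2])].

Fixpoint persistent (d m k i : nat) (X : {fset nat}) : Prop :=
  match i with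
  | 0 => X != fset0 /\ large_mul d m X
  | i'.+1 =>
      X != fset0 /\
      exists Y : {fset nat},
        [/\ Y `<=` X, persistent d m k i' Y &
         forall T : {fset (seq bool)}, quasistrong X T ->
         forall C : seq bool -> nat,
           (forall t, t \in T -> size t = fmax X -> C t < k) ->
           exists c, c < k /\
             exists S : {fset (seq bool)},
               [/\ S `<=` T, quasistrong Y S &
                forall s, is_leaf S s ->
                  exists t, [/\ t \in T, size t = fmax X, prefix s t & C t = c]]]
  end.

(* Let Y_j be the set of elements of X whose rank in X is a multiple of k^j.
   Between two elements of Y_(j+1) lie at least k elements of Y_j, so in a
   Y_j-quasistrong tree a node at a level of Y_(j+1) has at least 2^k > k
   descendants at the next level of Y_(j+1).  Building monochromatic
   Y_(j+1)-quasistrong subtrees from the top level down, the pigeonhole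
   principle gives two of these descendants whose subtrees have the same colour,
   and the two subtrees merge through their common ancestor.  Hence X = Y_0 is
   (omega^d, k, i)-persistent as soon as Y_i is omega^d-large.
   For that, the first two omega^(2d)-large blocks of X push the third one above
   2^2^(min X + 1) >= k^i.  Above k^i, an omega^(2e+2)-large interval of X lying
   above c contains an omega^e * c-large subset of Y_i: each of its first c
   blocks is omega^(2e+1)-large, so it meets Y_i if e = 0, and otherwise starts
   with two omega^(2e)-large pieces, the first meeting Y_i in some c', the second
   containing an omega^(e-1) * c'-large subset of Y_i above c'.  With c = min X
   this yields an omega^d-large subset of Y_i. *)

From mathcomp Require Import all_boot finmap zify.

Set Implicit Arguments.
Unset Strict Implicit.
Unset Printing Implicit Defensive.

Local Open Scope fset_scope.

Lemma ex_fset_min (A : {fset nat}) :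
  A != fset0 -> exists2 m, m \in A & forall x, x \in A -> m <= x.
Proof. by move=> /fset0Pn exA; case: (ex_minnP exA) => m; exists m. Qed.

Lemma leq_fmax (A : {fset nat}) x : x \in A -> x <= fmax A.
Proof. by move=> xA; apply: (@leq_bigmax_seq _ _ predT id x). Qed.

Lemma fmax_mem (A : {fset nat}) : A != fset0 -> fmax A \in A.
Proof.
move=> /fset0Pn [x xA].
have [y yA ymax] := @ex_maxnP [pred y | y \in A] _ (ex_intro _ x xA) (@leq_fmax A).
suff -> : fmax A = y by [].
apply/eqP; rewrite eqn_leq leq_fmax // andbT.
by apply/bigmax_leqP_seq => z zA _; apply: ymax.
Qed.

Lemma fmax_subset (A B : {fset nat}) : A `<=` B -> fmax A <= fmax B.
Proof. by move=> /fsubsetP AB; apply/bigmax_leqP_seq => x xA _; apply/leq_fmax/AB. Qed.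

Lemma card_fset_itv (A : {fset nat}) lo hi :
  (forall a, a \in A -> lo <= a < hi) -> #|` A| <= hi - lo.
Proof.
move=> Aitv; rewrite -(size_iota lo (hi - lo)).
apply: uniq_leq_size (fset_uniq A) _ => a aA.
by rewrite mem_iota; have /andP [loa ahi] := Aitv a aA; rewrite loa /=; lia.
Qed.

Section Prefix.
Variable T : eqType.
Implicit Types s t u : seq T.

Definition prefix_comparable s t := prefix s t || prefix t s.

Lemma prefix_size_eq s t : prefix s t -> size s = size t -> s = t.
Proof. by rewrite prefixE => /eqP ts st; rewrite -ts st take_size. Qed.

Lemma prefix_comparable_size_eq s t :
  prefix_comparable s t -> size s = size t -> s = t.
Proof.
by case/orP => [st|ts] sz; [apply: prefix_size_eq | apply/esym/prefix_size_eq].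
Qed.

Lemma prefix_comparable_common s t u :
  prefix s u -> prefix t u -> prefix_comparable s t.
Proof.
rewrite /prefix_comparable !prefixE => /eqP su /eqP tu.
case: (leqP (size s) (size t)) => [st|/ltnW ts]; apply/orP; [left|right]; apply/eqP.
  by rewrite -[in RHS]su -[t]tu take_takel.
by rewrite -[in RHS]tu -[s]su take_takel.
Qed.

Lemma prefix_common_size_eq s t u :
  prefix s u -> prefix t u -> size s = size t -> s = t.
Proof. by move=> su tu; apply/prefix_comparable_size_eq/(prefix_comparable_common su tu). Qed.

Lemma prefix_comparable_trans s u v :
  prefix s u -> prefix_comparable u v -> prefix_comparable s v.
Proof.
move=> su /orP [uv|vu]; first by rewrite /prefix_comparable (prefix_trans su uv).
exact: prefix_comparable_common su vu.
Qed.

Lemma prefix_comparable_leq s t :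
  prefix_comparable s t -> size s <= size t -> prefix s t.
Proof.
case/orP => // ts st.
have tsz : size t = size s by apply/eqP; rewrite eqn_leq st (size_prefix ts).
by rewrite (prefix_size_eq ts tsz) prefix_refl.
Qed.

End Prefix.

Definition prefixes (T : choiceType) (s : seq T) : {fset seq T} :=
  [fset take j s | j in iota 0 (size s).+1].

Lemma mem_prefixes (T : choiceType) (s u : seq T) : (u \in prefixes s) = prefix u s.
Proof.
apply/imfsetP/idP => [[j _ ->]|us]; first exact: prefix_take.
exists (size u); first by rewrite mem_iota ltnS size_prefix.
by move: us; rewrite prefixE => /eqP.
Qed.

Definition between (W : {fset nat}) a b : {fset nat} := [fset x in W | a < x <= b].

Lemma between_succ (W : {fset nat}) a b n : #|` between W a b| = n.+1 ->
  exists x, [/\ x \in W, a < x <= b, (forall z, z \in W -> ~ (a < z /\ z < x))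
              & #|` between W x b| = n].
Proof.
move=> card_ab; have /fset0Pn : between W a b != fset0 by rewrite -cardfs_eq0 card_ab.
case/ex_minnP => x; rewrite !inE => /and3P [xW ax xb] xmin.
have first_x z : z \in W -> a < z <= b -> x <= z.
  by move=> zW /andP [az zb]; apply: xmin; rewrite !inE zW az zb.
have split_x : between W a b = x |` between W x b.
  apply/fsetP => z; rewrite !inE; case: (eqVneq z x) => [->|zx] /=; first by rewrite xW ax xb.
  apply/and3P/and3P => [[zW az zb]|[zW xz zb]]; split => //; last exact: ltn_trans ax xz.
  by rewrite ltn_neqAle eq_sym zx first_x // az zb.
exists x; split => //; first by rewrite ax xb.
  move=> z zW [az zx]; have := first_x z zW.
  by rewrite az (ltnW (leq_trans zx xb)) leqNgt zx => /(_ isT).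
by move: card_ab; rewrite split_x cardfsU1 !inE ltnn andbF add1n => -[].
Qed.

Definition descendants (T : {fset (seq bool)}) s y : {fset (seq bool)} :=
  [fset u in T | (size u == y) && prefix s u].

Lemma card_descendants W T s y : quasistrong W T ->
  s \in T -> size s \in W -> y \in W -> size s <= y ->
  2 ^ #|` between W (size s) y| <= #|` descendants T s y|.
Proof.
case=> _ _ Tsplit sT sW yW; move En : #|` between W (size s) y| => n.
elim: n s En sT sW => [|n IH] s En sT sW sy.
  have sy' : size s = y.
    apply/eqP; rewrite eqn_leq sy /= leqNgt; apply/negP => lt_sy.
    have : y \in between W (size s) y by rewrite !inE yW lt_sy leqnn.
    by rewrite (cardfs0_eq En) inE.
  rewrite expn0 lt0n cardfs_eq0; apply/fset0Pn.
  by exists s; rewrite !inE sT sy' eqxx prefix_refl.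
have [x [xW /andP [sx xy] xnext En']] := between_succ En.
have [t1 [t2 [[t1T t2T t1x t2x] st1 st2 [t12 _] _]]] := Tsplit _ _ sW xW sx xnext s sT erefl.
have D1 : 2 ^ n <= #|` descendants T t1 y| by apply: IH; rewrite ?t1x.
have D2 : 2 ^ n <= #|` descendants T t2 y| by apply: IH; rewrite ?t2x.
have sub : descendants T t1 y `|` descendants T t2 y `<=` descendants T s y.
  apply/fsubsetP => u; rewrite !inE => /orP [] /and3P [uT -> tu];
  by rewrite uT (prefix_trans _ tu).
have disj : descendants T t1 y `&` descendants T t2 y = fset0.
  apply/fsetP => u; rewrite !inE; apply/negP => /andP [/and3P [_ _ t1u] /and3P [_ _ t2u]].
  have t1t2 : t1 = t2 by apply: (prefix_common_size_eq t1u t2u); rewrite t1x t2x.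
  by move: t12; rewrite t1t2 prefix_refl.
rewrite expnS mul2n -addnn; apply: leq_trans (leq_add D1 D2) _.
by rewrite -cardfsUI disj cardfs0 addn0 fsubset_leq_card.
Qed.

Lemma quasistrong_top W T s : quasistrong W T -> s \in T -> size s \in W ->
  exists t, [/\ t \in T, size t = fmax W & prefix s t].
Proof.
move=> qT sT sW; have Wn0 : W != fset0 by apply/fset0Pn; exists (size s).
have := card_descendants qT sT sW (fmax_mem Wn0) (leq_fmax sW).
move/(leq_trans (expn_gt0 2 _)); rewrite lt0n cardfs_eq0 => /fset0Pn [t].
by rewrite !inE => /and3P [tT /eqP st pt]; exists t.
Qed.

Lemma quasistrong_prefixes (s : seq bool) : quasistrong [fset size s] (prefixes s).
Proof.
split.
- by move=> u v; rewrite !mem_prefixes => us vu; apply: prefix_trans vu us.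
- by move=> x; rewrite inE => /eqP ->; exists s; rewrite mem_prefixes prefix_refl.
- by move=> x y; rewrite !inE => /eqP -> /eqP ->; rewrite ltnn.
Qed.

Definition splits (S : {fset (seq bool)}) (s : seq bool) y :=
  exists t1 t2,
    [/\ [/\ t1 \in S, t2 \in S, size t1 = y & size t2 = y],
        prefix s t1, prefix s t2, (~~ prefix t1 t2 /\ ~~ prefix t2 t1)
      & forall t, t \in S -> size t = y -> prefix s t -> t = t1 \/ t = t2].

Lemma splitsU S1 S2 s y : splits S1 s y ->
  (forall t, t \in S2 -> size t = y -> ~~ prefix s t) -> splits (S1 `|` S2) s y.
Proof.
move=> [t1 [t2 [[t1S t2S t1y t2y] st1 st2 t12 only12]]] S2s.
exists t1, t2; split; rewrite ?inE ?t1S ?t2S //.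
move=> t; rewrite inE => /orP [tS|tS] ty st; first exact: only12.
by move: (S2s t tS ty); rewrite st.
Qed.

Lemma branches_disjoint (Sa Sb : {fset (seq bool)}) ua ub v t :
  ua != ub -> size ua = size ub ->
  {in Sa, forall w, prefix_comparable ua w} -> {in Sb, forall w, prefix_comparable ub w} ->
  v \in Sa -> t \in Sb -> size ua <= size v -> ~~ prefix v t.
Proof.
move=> uab sab Saa Sbb vS tS uav; apply/negP => vt.
have ua_v : prefix ua v by apply: prefix_comparable_leq; [apply: Saa | ].
have ub_t : prefix ub t.
  by apply: prefix_comparable_leq; [apply: Sbb | rewrite -sab (leq_trans uav (size_prefix vt))].
by move/negP: uab; apply; apply/eqP; apply: prefix_common_size_eq (prefix_trans ua_v vt) ub_t sab.
Qed.

Section Join.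

Variables (S1 S2 : {fset (seq bool)}) (u1 u2 : seq bool).
Hypotheses (u1S1 : u1 \in S1) (u2S2 : u2 \in S2) (u12 : u1 != u2)
  (size_u12 : size u1 = size u2)
  (S1u1 : {in S1, forall v, prefix_comparable u1 v})
  (S2u2 : {in S2, forall v, prefix_comparable u2 v}).

Lemma splits_root s : prefix s u1 -> prefix s u2 -> splits (S1 `|` S2) s (size u1).
Proof.
have incomparable a b : a != b -> size a = size b -> ~~ prefix a b.
  by move=> ab sab; apply: contra ab => /prefix_size_eq /(_ sab) ->.
move=> su1 su2; exists u1, u2; split; rewrite ?inE ?u1S1 ?u2S2 ?orbT //.
  by split; apply: incomparable; rewrite // eq_sym.
move=> t; rewrite inE => /orP [tS|tS] tsz _; [left|right].
  by apply/esym/prefix_comparable_size_eq; [apply: S1u1 | rewrite tsz].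
by apply/esym/prefix_comparable_size_eq; [apply: S2u2 | rewrite tsz].
Qed.

Lemma join_comparable s : prefix s u1 -> prefix s u2 ->
  {in S1 `|` S2, forall v, prefix_comparable s v}.
Proof. by move=> su1 su2 v; rewrite inE => /orP [/S1u1|/S2u2]; apply: prefix_comparable_trans. Qed.

Variable Y : {fset nat}.
Hypotheses (q1 : quasistrong Y S1) (q2 : quasistrong Y S2)
  (u1Y : size u1 \in Y) (u1min : forall z, z \in Y -> size u1 <= z).

Lemma quasistrong_join s : prefix s u1 -> prefix s u2 -> size s < size u1 ->
  quasistrong (size s |` Y) (S1 `|` S2).
Proof.
move=> su1 su2 s_u1; have [tree1 lev1 split1] := q1; have [tree2 lev2 split2] := q2.
have sS1 : s \in S1 by apply: tree1 su1.
split.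
- move=> a b; rewrite !inE => /orP [aS|aS] ba; first by rewrite (tree1 _ _ aS ba).
  by rewrite (tree2 _ _ aS ba) orbT.
- move=> x; rewrite in_fset1U => /orP [/eqP ->|xY]; first by exists s; rewrite inE sS1.
  by have [w [wS wx]] := lev1 _ xY; exists w; rewrite inE wS.
move=> x x' xY x'Y xx' next w wS wx.
have x'Y' : x' \in Y.
  move: x'Y; rewrite in_fset1U => /orP [/eqP x's|//]; exfalso.
  move: xY; rewrite in_fset1U => /orP [/eqP xs|/u1min u1x].
    by move: xx'; rewrite xs x's ltnn.
  by move: (leq_ltn_trans u1x xx'); rewrite x's ltnNge (ltnW s_u1).
case: (eqVneq x (size s)) => [xs|xs].
  have x'u1 : x' = size u1.
    apply/eqP; rewrite eqn_leq u1min // andbT leqNgt; apply/negP => u1x'.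
    by apply: (next (size u1)); rewrite ?in_fset1U ?u1Y ?orbT // xs.
  have ws : w = s.
    by apply/esym/prefix_comparable_size_eq; [apply: join_comparable | rewrite wx xs].
  by rewrite x'u1 ws; apply: splits_root.
have xY' : x \in Y by move: xY; rewrite in_fset1U (negbTE xs).
have next' z : z \in Y -> ~ (x < z /\ z < x') by move=> zY; apply: next; rewrite in_fset1U zY orbT.
have u1x : size u1 <= size w by rewrite wx u1min.
change (splits (S1 `|` S2) w x').
move: wS; rewrite inE => /orP [wS|wS].
  apply: (splitsU (split1 _ _ xY' x'Y' xx' next' w wS wx)) => t tS _.
  exact: (branches_disjoint u12 size_u12 S1u1 S2u2 wS tS u1x).
rewrite fsetUC; apply: (splitsU (split2 _ _ xY' x'Y' xx' next' w wS wx)) => t tS _.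
by apply: (branches_disjoint _ _ S2u2 S1u1 wS tS); rewrite 1?eq_sym // -size_u12.
Qed.

End Join.

Lemma fset_pigeonhole (K : choiceType) (A : {fset K}) k (P : K -> nat -> Prop) :
  k < #|` A| -> (forall u, u \in A -> exists2 c, c < k & P u c) ->
  exists u1 u2 c, [/\ u1 \in A, u2 \in A, u1 != u2, P u1 c & P u2 c].
Proof.
move=> kA colA.
have /fin_all_exists [f Pf] : forall x : A, exists c : 'I_k, P (val x) c.
  by move=> x; have [c ck Pc] := colA _ (fsvalP x); exists (Ordinal ck).
have /injectivePn [x [y xy fxy]] : ~~ injectiveb f.
  by apply/injectiveP => /leq_card; rewrite card_ord -cardfE leqNgt kA.
exists (val x), (val y), (f x); split; rewrite ?fsvalP ?(inj_eq val_inj) //.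
by rewrite fxy.
Qed.

Definition reaches (T : {fset (seq bool)}) (W : {fset nat}) (C : seq bool -> nat) c u :=
  exists t, [/\ t \in T, size t = fmax W, prefix u t & C t = c].

Definition separated (W : {fset nat}) k (Y : {fset nat}) :=
  forall y y', y \in Y -> y' \in Y -> y < y' -> k < 2 ^ #|` between W y y'|.

Section Colouring.

Variables (W : {fset nat}) (T : {fset (seq bool)}) (k : nat) (C : seq bool -> nat).
Hypotheses (qT : quasistrong W T) (Ck : forall t, t \in T -> size t = fmax W -> C t < k).

Definition monochromatic_subtree (Y : {fset nat}) s c S :=
  [/\ S `<=` T, quasistrong Y S, s \in S,
      {in S, forall v, prefix_comparable s v} & {in S, forall v, reaches T W C c v}].

Lemma monochromatic_prefixes s : s \in T -> size s \in W ->
  exists2 c, c < k & monochromatic_subtree [fset size s] s c (prefixes s).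
Proof.
move=> sT sW; have [Ttree _ _] := qT; have [t [tT tW st]] := quasistrong_top qT sT sW.
exists (C t); first exact: Ck.
split.
- by apply/fsubsetP => u; rewrite mem_prefixes => us; apply: Ttree us.
- exact: quasistrong_prefixes.
- by rewrite mem_prefixes prefix_refl.
- by move=> v; rewrite mem_prefixes /prefix_comparable => ->; rewrite orbT.
- by move=> v; rewrite mem_prefixes => vs; exists t; split => //; apply: prefix_trans vs st.
Qed.

Lemma ex_monochromatic_subtree n (Y : {fset nat}) s :
  #|` Y| = n.+1 -> Y `<=` W -> separated W k Y ->
  s \in T -> size s \in Y -> (forall z, z \in Y -> size s <= z) ->
  exists2 c, c < k & exists S, monochromatic_subtree Y s c S.
Proof.
elim: n Y s => [|n IH] Y s Yn YW sepY sT sY smin.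
  have Ys : Y = [fset size s].
    have /cardfs1P [y Yy] : #|` Y| == 1 by rewrite Yn.
    by move: sY; rewrite Yy inE => /eqP ->.
  have [c ck mono] := monochromatic_prefixes sT (fsubsetP YW _ sY).
  by exists c => //; exists (prefixes s); rewrite Ys.
set Y' := Y `\ size s.
have Y'n : #|` Y'| = n.+1 by move: Yn; rewrite (cardfsD1 (size s)) sY add1n => -[].
have Y'Y : Y' `<=` Y := fsubD1set _ _.
have [y' y'Y' y'min] : exists2 y', y' \in Y' & forall z, z \in Y' -> y' <= z.
  by apply: ex_fset_min; rewrite -cardfs_eq0 Y'n.
have y'Y : y' \in Y := fsubsetP Y'Y _ y'Y'.
have sy' : size s < y'.
  by move: y'Y'; rewrite in_fsetD1 => /andP [y's _]; rewrite ltn_neqAle eq_sym y's smin.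
set D := descendants T s y'.
have kD : k < #|` D|.
  apply: leq_trans (sepY _ _ sY y'Y sy') _.
  exact: card_descendants qT sT (fsubsetP YW _ sY) (fsubsetP YW _ y'Y) (ltnW sy').
have colD u : u \in D -> exists2 c, c < k & exists S, monochromatic_subtree Y' u c S.
  rewrite !inE => /and3P [uT /eqP uy' _].
  apply: IH; rewrite ?uy' //; first exact: fsubset_trans Y'Y YW.
  by move=> z z' zY z'Y; apply: sepY; apply: (fsubsetP Y'Y).
have [u1 [u2 [c [u1D u2D u12 [S1 [S1T q1 u1S1 S1u1 S1c]] [S2 [S2T q2 u2S2 S2u2 S2c]]]]]] :=
  fset_pigeonhole kD colD.
have memD u : u \in D -> size u = y' /\ prefix s u by rewrite !inE => /and3P [_ /eqP].
have [u1y' su1] := memD _ u1D; have [u2y' su2] := memD _ u2D.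
exists c; first by have [t [tT tW _ <-]] := S1c _ u1S1; apply: Ck.
exists (S1 `|` S2); split.
- by rewrite fsubUset S1T S2T.
- rewrite -(fsetD1K sY).
  by apply: (quasistrong_join u1S1 u2S2 u12 _ S1u1 S2u2 q1 q2); rewrite ?u1y' ?u2y'.
- by have [S1tree _ _] := q1; rewrite inE (S1tree _ _ u1S1 su1).
- exact: (join_comparable S1u1 S2u2 su1 su2).
- by move=> v; rewrite inE => /orP [/S1c|/S2c].
Qed.

End Colouring.

Lemma persistent_step d m k j (W Y : {fset nat}) : Y `<=` W -> Y != fset0 ->
  separated W k Y -> persistent d m k j Y -> persistent d m k j.+1 W.
Proof.
move=> YW Yn0 sepY pY; split.
  by apply: contraNneq Yn0 => W0; rewrite -fsubset0 -W0.
exists Y; split => // T qT C Ck.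
have [y0 y0Y y0min] := ex_fset_min Yn0.
have [_ levT _] := qT; have [s [sT sy0]] := levT _ (fsubsetP YW _ y0Y).
have Yn : #|` Y| = #|` Y|.-1.+1 by rewrite prednK // lt0n cardfs_eq0.
have [c ck [S [ST qS _ _ Sc]]] : exists2 c, c < k & exists S,
    monochromatic_subtree W T C Y s c S.
  by apply: ex_monochromatic_subtree Yn YW sepY sT _ _; rewrite // sy0.
by exists c; split => //; exists S; split => // v [vS _]; apply: Sc.
Qed.

Lemma large_neq0 e A : 0 < e -> large e A -> A != fset0.
Proof.
case: e => // -[|e] _ /=; first by case=> m [mA _ _]; apply/fset0Pn; exists m.
by case=> m [X1 [mA _ _ _ _]]; apply/fset0Pn; exists m.
Qed.

Lemma times_large_neq0 (P : {fset nat} -> Prop) n B :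
  (forall A, P A -> A != fset0) -> 0 < n -> times_large P n B -> B != fset0.
Proof.
move=> Pn0; case: n => // n _ [A [R [/Pn0 /fset0Pn [x xA] _ _ ->]]].
by apply/fset0Pn; exists x; rewrite inE xA.
Qed.

Lemma times_large_card (P : {fset nat} -> Prop) n B :
  (forall A, P A -> A != fset0) -> times_large P n B -> n <= #|` B|.
Proof.
move=> Pn0; elim: n B => // n IH B [A [R [/Pn0 An0 /IH nR AR ->]]].
have AR0 : A `&` R = fset0.
  by apply/fsetP => x; rewrite !inE; apply/negP => /andP [xA /(AR _ _ xA)]; rewrite ltnn.
have := cardfsUI A R; rewrite AR0 cardfs0 addn0 => ->.
by rewrite -add1n leq_add // lt0n cardfs_eq0.
Qed.

Lemma large_mul1 d X : large d X -> large_mul d 1 X.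
Proof. by move=> lX; exists X, fset0; rewrite fsetU0. Qed.

Lemma large_fsetU1 e c (Z : {fset nat}) : (forall z, z \in Z -> c < z) ->
  times_large (large e) c Z -> large e.+1 (c |` Z).
Proof.
move=> cZ tZ; have cmin x : x \in c |` Z -> c <= x by case/fset1UP => [->|/cZ /ltnW].
case: e tZ => [|e] tZ; last by exists c, Z; split; rewrite ?fset1U1.
exists c; split; rewrite ?fset1U1 // cardfsU1.
have -> : c \notin Z by apply/negP => /cZ; rewrite ltnn.
by rewrite add1n ltnS; apply: times_large_card tZ.
Qed.

Lemma large_omega e A : 0 < e -> large e A -> omega_large A.
Proof.
elim: e A => // -[_ A _ //|e IH] A _ [m [X1 [mA mmin eA X1m tl]]].
exists m; split => //; rewrite eA cardfsU1.
have -> : m \notin X1 by apply/negP => /X1m; rewrite ltnn.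
case: m {mA mmin eA} X1m tl => // m X1m [B [R [lB _ _ eX1]]].
have [b [bB _ bB_card]] := IH B isT lB.
have BX1 : B `<=` X1 by rewrite eX1 fsubsetUl.
have := X1m _ (fsubsetP BX1 _ bB); have := fsubset_leq_card BX1; lia.
Qed.

Lemma times_large_fmax (P : {fset nat} -> Prop) n B lo :
  (forall A lo, P A -> (forall a, a \in A -> lo <= a) -> 2 * lo <= fmax A) ->
  0 < n -> 0 < lo -> times_large P n B -> (forall b, b \in B -> lo <= b) ->
  2 ^ n * lo <= fmax B.
Proof.
move=> Pdouble; elim: n B lo => // n IH B lo _ lo0 [A [R [PA tR AR eB]]] Blo.
have AB : A `<=` B by rewrite eB fsubsetUl.
have RB : R `<=` B by rewrite eB fsubsetUr.
have dA : 2 * lo <= fmax A by apply: Pdouble PA _ => a /(fsubsetP AB); apply: Blo.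
case: n IH tR => [_ _|n IH tR]; first by rewrite expn1 (leq_trans dA) ?fmax_subset.
have An0 : A != fset0 by apply: contraTneq dA => ->; rewrite /fmax big_nil -ltnNge; lia.
have Rlo b : b \in R -> 2 * lo <= b.
  by move=> bR; apply/ltnW/(leq_ltn_trans dA)/(AR _ _ (fmax_mem An0) bR).
have := IH R (2 * lo) isT (leq_trans lo0 (leq_pmull lo (isT : 0 < 2))) tR Rlo.
by rewrite mulnA -expnSr => /leq_trans; apply; apply: fmax_subset.
Qed.

Lemma large_double e A lo : 0 < e -> large e A ->
  (forall a, a \in A -> lo <= a) -> 2 * lo <= fmax A.
Proof.
elim: e A lo => // -[_ A lo _ [m [mA mmin mcard]] Alo|e IH A lo _ lA Alo].
  have : #|` A| <= (fmax A).+1 - m by apply: card_fset_itv => a aA; rewrite mmin // ltnS leq_fmax.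
  by have := Alo m mA; lia.
case: lA => m [X1 [mA _ eA X1m tl]]; have lom := Alo m mA.
case: m mA eA X1m tl lom => [|m] mA eA X1m tl lom.
  by rewrite leqn0 in lom; rewrite (eqP lom).
have := times_large_fmax (n := m.+1) (lo := m.+2) (fun B lo' lB Blo => IH B lo' isT lB Blo)
  isT isT tl X1m.
have X1A : X1 `<=` A by rewrite eA fsubsetU1.
move=> /leq_trans /(_ (fmax_subset X1A)); apply: leq_trans.
by rewrite mulnC leq_mul // (leq_trans lom) // ltnW // ltn_expl.
Qed.

Lemma large_exp_fmax e A lo : 1 < e -> large e A -> 0 < lo ->
  (forall a, a \in A -> lo <= a) -> 2 ^ lo <= fmax A.
Proof.
case: e => [|[|e]] // _ [m [X1 [mA _ eA X1m tl]]] lo0 Alo; have lom := Alo m mA.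
have := times_large_fmax (n := m) (lo := m.+1)
  (fun B lo' lB Blo => @large_double e.+1 B lo' isT lB Blo) (leq_trans lo0 lom) isT tl X1m.
have X1A : X1 `<=` A by rewrite eA fsubsetU1.
move=> /leq_trans /(_ (fmax_subset X1A)); apply: leq_trans.
by rewrite (leq_trans (leq_pexp2l _ lom)) // leq_pmulr.
Qed.

Section Superset.

Variable P : {fset nat} -> Prop.
Hypotheses (Pn0 : forall A, P A -> A != fset0)
  (P_superset : forall A A', P A -> A `<=` A' -> (forall x, x \in A' -> 0 < x) -> P A').

Lemma times_large_superset n n' B W : 0 < n' -> n' <= n -> times_large P n B ->
  B `<=` W -> (forall x, x \in W -> 0 < x) -> times_large P n' W.
Proof.
elim: n' n B W => // n' IH [//|n] B W _ n'n [A0 [B0 [PA0 tB0 AB0 eB]]] BW Wpos.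
have A0W : A0 `<=` W by apply: fsubset_trans BW; rewrite eB fsubsetUl.
have B0W : B0 `<=` W by apply: fsubset_trans BW; rewrite eB fsubsetUr.
case: n' IH n'n => [_ _|n' IH n'n].
  by exists W, fset0; split; rewrite ?fsetU0 //; apply: P_superset PA0 A0W Wpos.
have [s sB0 smin] := ex_fset_min (times_large_neq0 Pn0 (leq_ltn_trans (leq0n n') n'n) tB0).
have Wpos' (V : {fset nat}) : V `<=` W -> forall x, x \in V -> 0 < x.
  by move=> VW x /(fsubsetP VW); apply: Wpos.
have lowW : [fset w in W | w < s] `<=` W by apply/fsubsetP => w; rewrite !inE => /andP [].
have highW : [fset w in W | s <= w] `<=` W by apply/fsubsetP => w; rewrite !inE => /andP [].
exists [fset w in W | w < s], [fset w in W | s <= w]; split.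
- apply: P_superset PA0 _ (Wpos' _ lowW).
  by apply/fsubsetP => a aA; rewrite !inE (fsubsetP A0W _ aA) AB0.
- apply: IH tB0 _ (Wpos' _ highW) => //.
  by apply/fsubsetP => b bB; rewrite !inE (fsubsetP B0W _ bB) smin.
- by move=> a b; rewrite !inE => /andP [_ ?] /andP [_ ?]; apply: leq_trans (_ : s <= b).
- by apply/fsetP => w; rewrite !inE; case: (w \in W) => //=; case: ltnP.
Qed.

End Superset.

Lemma large_superset e (Z W : {fset nat}) : 0 < e -> large e Z -> Z `<=` W ->
  (forall x, x \in W -> 0 < x) -> large e W.
Proof.
elim: e Z W => // e IH Z W _ lZ ZW Wpos.
have /fset0Pn [z zZ] := large_neq0 (ltn0Sn e) lZ.
have [w wW wmin] : exists2 w, w \in W & forall x, x \in W -> w <= x.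
  by apply/ex_fset_min/fset0Pn; exists z; apply: (fsubsetP ZW).
case: e IH lZ => [_ [m [mZ _ mcard]]|e IH [m [X1 [mZ _ eZ X1m tX1]]]].
  exists w; split => //; have := wmin m (fsubsetP ZW _ mZ); have := fsubset_leq_card ZW; lia.
have wm : w <= m := wmin m (fsubsetP ZW _ mZ).
exists w, (W `\ w); split; rewrite ?fsetD1K //.
  by move=> x; rewrite in_fsetD1 => /andP [xw xW]; rewrite ltn_neqAle eq_sym xw wmin.
apply: (times_large_superset (P := large e.+1) _ _ (Wpos _ wW) wm tX1).
- by move=> A; apply: large_neq0.
- by move=> A A' lA AA' A'pos; apply: IH lA AA' A'pos.
- apply/fsubsetP => x xX1; rewrite in_fsetD1 (fsubsetP ZW) ?eZ ?inE ?xX1 ?orbT // andbT.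
  by apply: contraTneq (X1m _ xX1) => ->; rewrite -leqNgt.
- by move=> x /(fsubsetP (fsubD1set W w)); apply: Wpos.
Qed.

Section Rank.

Variable X : {fset nat}.

Definition fsort : seq nat := sort leq X.
Definition rank x := index x fsort.

Lemma mem_fsort x : (x \in fsort) = (x \in X).
Proof. by rewrite mem_sort. Qed.

Lemma size_fsort : size fsort = #|` X|.
Proof. by rewrite size_sort. Qed.

Lemma sorted_fsort_leq : sorted leq fsort.
Proof. exact: sort_sorted leq_total _. Qed.

Lemma sorted_fsort : sorted ltn fsort.
Proof. by rewrite ltn_sorted_uniq_leq sort_uniq fset_uniq sorted_fsort_leq. Qed.

Lemma rank_lt_card x : x \in X -> rank x < #|` X|.
Proof. by rewrite -size_fsort index_mem mem_fsort. Qed.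

Lemma nth_fsort_mem i : i < #|` X| -> nth 0 fsort i \in X.
Proof. by rewrite -mem_fsort -size_fsort; apply: mem_nth. Qed.

Lemma rank_nth i : i < #|` X| -> rank (nth 0 fsort i) = i.
Proof. by move=> iX; rewrite /rank index_uniq ?size_fsort // sort_uniq fset_uniq. Qed.

Lemma nth_rank x : x \in X -> nth 0 fsort (rank x) = x.
Proof. by rewrite -mem_fsort; apply: nth_index. Qed.

Lemma rank_ltn : {in X &, {mono rank : x y / x < y}}.
Proof.
move=> x y xX yX; rewrite -!mem_fsort in xX yX; apply/idP/idP.
  exact: (sorted_ltn_index ltn_trans sorted_fsort _ _ xX yX).
apply: contraLR; rewrite -!leqNgt.
exact: (sorted_leq_index leq_trans leqnn sorted_fsort_leq _ _ yX xX).
Qed.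

Lemma rank_leq : {in X &, {mono rank : x y / x <= y}}.
Proof. by move=> x y xX yX; rewrite [LHS]leqNgt [RHS]leqNgt rank_ltn. Qed.

Lemma nth_fsort_leq i j : i <= j < #|` X| -> nth 0 fsort i <= nth 0 fsort j.
Proof.
move=> /andP [ij jX]; have iX := leq_ltn_trans ij jX.
by rewrite -rank_leq ?rank_nth ?nth_fsort_mem.
Qed.

Lemma rank_fset_min m : m \in X -> (forall x, x \in X -> m <= x) -> rank m = 0.
Proof.
move=> mX mmin; apply/eqP; rewrite -leqn0 leqNgt; apply/negP => rm.
have := mmin _ (nth_fsort_mem (ltn_trans rm (rank_lt_card mX))).
by rewrite leqNgt -rank_ltn ?nth_fsort_mem ?rank_nth ?rm // (ltn_trans rm (rank_lt_card mX)).
Qed.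

End Rank.

Definition thin (X : {fset nat}) p : {fset nat} := [fset x in X | p %| rank X x].

Lemma thin_subset X p : thin X p `<=` X.
Proof. by apply/fsubsetP => x; rewrite !inE => /andP []. Qed.

Lemma thin1 X : thin X 1 = X.
Proof. by apply/fsetP => x; rewrite !inE dvd1n andbT. Qed.

Lemma thin_dvd X p q : p %| q -> thin X q `<=` thin X p.
Proof. by move=> pq; apply/fsubsetP => x; rewrite !inE => /andP [-> /(dvdn_trans pq)]. Qed.

Lemma fset_min_thin X p m :
  m \in X -> (forall x, x \in X -> m <= x) -> m \in thin X p.
Proof. by move=> mX mmin; rewrite !inE mX rank_fset_min ?dvdn0. Qed.

Definition convex (X B : {fset nat}) :=
  forall x a b, x \in X -> a \in B -> b \in B -> a <= x -> x <= b -> x \in B.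

Lemma convexUl X A B : convex X (A `|` B) -> fset_lt A B -> convex X A.
Proof.
move=> cAB AB x a b xX aA bA ax xb.
have := cAB x a b xX; rewrite !inE aA bA => /(_ isT isT ax xb) /orP [] // /(AB _ _ bA).
by rewrite ltnNge xb.
Qed.

Lemma convexUr X A B : convex X (A `|` B) -> fset_lt A B -> convex X B.
Proof.
move=> cAB AB x a b xX aB bB ax xb.
have := cAB x a b xX; rewrite !inE aB bB !orbT => /(_ isT isT ax xb) /orP [] // /AB /(_ aB).
by rewrite ltnNge ax.
Qed.

Lemma convexU1 X m B : convex X (m |` B) -> (forall b, b \in B -> m < b) -> convex X B.
Proof. by move=> cmB mB; apply: (convexUr cmB) => a b /fset1P ->; apply: mB. Qed.

Lemma thin_meets_convex X G B : 0 < G -> B `<=` X -> convex X B -> G <= #|` B| ->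
  exists2 x, x \in B & x \in thin X G.
Proof.
move=> G0 BX cB GB.
have Bn0 : B != fset0 by rewrite -cardfs_gt0 (leq_trans G0 GB).
have [a aB amin] := ex_fset_min Bn0; have bB := fmax_mem Bn0.
have [aX bX] := (fsubsetP BX _ aB, fsubsetP BX _ bB).
have card_B : #|` B| <= (rank X (fmax B)).+1 - rank X a.
  have rank_inj : {in B &, injective (rank X)}.
    by move=> x y /(fsubsetP BX) xX /(fsubsetP BX) yX rxy; rewrite -(nth_rank xX) rxy nth_rank.
  have <- : #|` rank X @` B| = #|` B| by apply: card_in_imfset.
  apply: card_fset_itv => _ /imfsetP [x xB ->]; have xX := fsubsetP BX _ xB.
  by rewrite !rank_leq ?amin // ltnS rank_leq ?leq_fmax.
set t := (rank X a + G.-1) %/ G * G.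
have [a_t t_b] : rank X a <= t /\ t <= rank X (fmax B) by rewrite /t; lia.
have tX : t < #|` X| := leq_ltn_trans t_b (rank_lt_card bX).
exists (nth 0 (fsort X) t); last by rewrite !inE nth_fsort_mem // rank_nth // dvdn_mull.
apply: (cB _ a (fmax B) (nth_fsort_mem tX) aB bB).
  by rewrite -{1}(nth_rank aX) nth_fsort_leq // a_t.
by rewrite -[X in _ <= X](nth_rank bX) nth_fsort_leq // t_b rank_lt_card.
Qed.

Lemma card_between_thin X p k y y' : 0 < p ->
  y \in thin X (p * k) -> y' \in thin X (p * k) -> y < y' ->
  k <= #|` between (thin X p) y y'|.
Proof.
move=> p0; rewrite !inE => /andP [yX pk_y] /andP [y'X pk_y'] yy'.
set i := rank X y; set i' := rank X y'.
have ii' : i + p * k <= i'.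
  have lt_ii' : i < i' by rewrite rank_ltn.
  have : p * k %| i' - i by apply: dvdn_sub.
  by move/(dvdn_leq _); rewrite subn_gt0 => /(_ lt_ii'); lia.
pose f j := nth 0 (fsort X) (i + j.+1 * p).
have fi' j : j < k -> i + j.+1 * p <= i'.
  by move=> jk; apply: leq_trans ii'; rewrite leq_add2l mulnC leq_mul2l jk orbT.
have fX j : j < k -> i + j.+1 * p < #|` X|.
  by move=> /fi' /leq_ltn_trans; apply; apply: rank_lt_card.
have f_rank j : j < k -> rank X (f j) = (i + j.+1 * p)%N by move=> /fX; apply: rank_nth.
rewrite -(size_iota 0 k) -(size_map f); apply: uniq_leq_size.
  rewrite map_inj_in_uniq ?iota_uniq // => j1 j2; rewrite !mem_iota /= => j1k j2k.
  move/(congr1 (rank X)); rewrite !f_rank // => /addnI /eqP.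
  by rewrite eqn_pmul2r // => /eqP [].
move=> x /mapP [j]; rewrite mem_iota /= => jk ->.
have fjX : f j \in X := nth_fsort_mem (fX j jk).
rewrite !inE fjX -(rank_ltn yX fjX) -(rank_leq fjX y'X) f_rank // fi' // andbT.
rewrite dvdn_add ?dvdn_mull ?(dvdn_trans (dvdn_mulr k (dvdnn p)) pk_y) //=.
by rewrite -[X in X < _]addn0 ltn_add2l muln_gt0 p0.
Qed.

Lemma times_large_refine (P Q R : {fset nat} -> Prop) (D : {fset nat}) :
  (forall B, R B -> P B -> exists Z, [/\ Z `<=` B, Z `<=` D & Q Z]) ->
  (forall A B, R (A `|` B) -> fset_lt A B -> R A /\ R B) ->
  forall n n' W, n' <= n -> times_large P n W -> R W ->
  exists Z, [/\ Z `<=` W, Z `<=` D & times_large Q n' Z].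
Proof.
move=> PQ R_split; elim=> [|n IH] [|n'] W //; try by exists fset0; rewrite !fsub0set.
move=> n'n [A [B [PA tB AB ->]]] /R_split /(_ AB) [RA RB].
have [ZA [ZAA ZAD QZA]] := PQ A RA PA.
have [ZB [ZBB ZBD tZB]] := IH n' B n'n tB RB.
exists (ZA `|` ZB); split; first exact: fsetUSS.
  by rewrite fsubUset ZAD ZBD.
exists ZA, ZB; split => // a b /(fsubsetP ZAA) aA /(fsubsetP ZBB); exact: AB.
Qed.

Section ThinLarge.

Variables (X : {fset nat}) (G : nat).
Hypothesis G0 : 0 < G.

Definition thin_block_large e := forall B : {fset nat},
  B `<=` X -> convex X B -> (forall b, b \in B -> G <= b) -> (forall b, b \in B -> 1 < b) ->
  large e.*2.+1 B -> exists Z, [/\ Z `<=` B, Z `<=` thin X G & large e Z].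

Definition thin_gap_large e := forall c (V : {fset nat}),
  V `<=` X -> convex X V -> (forall v, v \in V -> G <= v) -> 0 < c ->
  (forall v, v \in V -> c < v) -> large e.*2.+2 V ->
  exists Z, [/\ Z `<=` V, Z `<=` thin X G & times_large (large e) c Z].

Lemma thin_meets_large e B : 0 < e -> B `<=` X -> convex X B ->
  (forall b, b \in B -> G <= b) -> large e B -> exists2 x, x \in B & x \in thin X G.
Proof.
move=> e0 BX cB GB /(large_omega e0) [m [mB _ mcard]].
by apply: thin_meets_convex => //; apply: leq_trans (GB _ mB) (ltnW mcard).
Qed.

Lemma thin_block_large0 : thin_block_large 0.
Proof.
move=> B BX cB GB _ lB; have [x xB xthin] := thin_meets_large (e := 1) isT BX cB GB lB.
by exists [fset x]; rewrite !fsub1set xB xthin; split => //=; apply/fset0Pn; exists x; rewrite inE.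
Qed.

Lemma thin_gap_large_of_block e : thin_block_large e -> thin_gap_large e.
Proof.
move=> block c V VX cV GV c0 cV_lt [v [V1 [vV _ eV V1v tV1]]].
have V1V : V1 `<=` V by rewrite eV fsubsetU1.
pose R B := B `<=` V1 /\ convex X B.
have RV1 : R V1 by split => //; apply: (convexU1 (m := v)); rewrite -?eV.
have R_split A B : R (A `|` B) -> fset_lt A B -> R A /\ R B.
  move=> [ABV1 cAB] AB; rewrite fsubUset in ABV1; case/andP: ABV1 => AV1 BV1.
  by split; split => //; [apply: convexUl cAB AB | apply: convexUr cAB AB].
have block_R B : R B -> large e.*2.+1 B -> exists Z, [/\ Z `<=` B, Z `<=` thin X G & large e Z].
  move=> [BV1 cB] lB; have BV := fsubset_trans BV1 V1V.
  apply: block => // [|b bB|b bB]; first exact: fsubset_trans BV VX.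
    by apply/GV/(fsubsetP BV).
  by have := cV_lt _ vV; have := V1v _ (fsubsetP BV1 _ bB); lia.
have [Z [ZV1 Zthin tZ]] := times_large_refine block_R R_split (ltnW (cV_lt _ vV)) tV1 RV1.
by exists Z; split => //; apply: fsubset_trans ZV1 V1V.
Qed.

Lemma thin_block_large_of_gap e : thin_gap_large e -> thin_block_large e.+1.
Proof.
move=> gap B BX cB GB B1_lt [b [B1 [bB _ eB B1b tB1]]].
have B1B : B1 `<=` B by rewrite eB fsubsetU1.
have cB1 : convex X B1 by apply: (convexU1 (m := b)); rewrite -?eB.
have b2 : 1 < b := B1_lt _ bB.
(* [b >= 2] provides two pieces [B_1 < B_2]: [B_1] meets [thin X G] in the new
   minimum [c1], and [B_2] contains [c1] omega^e-large subsets of [thin X G]. *)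
case: b b2 {bB eB} B1b tB1 => [|[|b]] // _ B1b.
move=> [B_1 [R1 [lB_1 [B_2 [R2 [lB_2 _ B2R2 eR1]]] B1R1 eB1]]].
have [B_1B1 R1B1] : B_1 `<=` B1 /\ R1 `<=` B1 by rewrite eB1 fsubsetUl fsubsetUr.
have B_2R1 : B_2 `<=` R1 by rewrite eR1 fsubsetUl.
have B_2B := fsubset_trans B_2R1 (fsubset_trans R1B1 B1B).
have B_1B := fsubset_trans B_1B1 B1B.
have [c1 c1B_1 c1thin] : exists2 c1, c1 \in B_1 & c1 \in thin X G.
  apply: (thin_meets_large (e := e.*2.+2)) lB_1 => //; first exact: fsubset_trans B_1B BX.
    by apply: (convexUl (B := R1)); rewrite -?eB1.
  by move=> x /(fsubsetP B_1B) /GB.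
have [Z' [Z'B_2 Z'thin tZ']] :
    exists Z, [/\ Z `<=` B_2, Z `<=` thin X G & times_large (large e) c1 Z].
  apply: gap lB_2 => //.
  - exact: fsubset_trans B_2B BX.
  - apply: (convexUl (B := R2)); last exact: B2R2.
    by rewrite -eR1; apply: (convexUr (A := B_1)); rewrite -?eB1.
  - by move=> x /(fsubsetP B_2B) /GB.
  - by apply: ltnW; apply: B1_lt (fsubsetP B_1B _ c1B_1).
  - by move=> x /(fsubsetP B_2R1); apply: B1R1.
exists (c1 |` Z'); split.
- by rewrite fsubUset fsub1set (fsubsetP B_1B) // (fsubset_trans Z'B_2 B_2B).
- by rewrite fsubUset fsub1set c1thin.
- by apply: large_fsetU1 tZ' => z /(fsubsetP Z'B_2) /(fsubsetP B_2R1); apply: B1R1.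
Qed.

Lemma thin_gap_large_all e : thin_gap_large e.
Proof.
apply: thin_gap_large_of_block; elim: e => [|e IH]; first exact: thin_block_large0.
exact/thin_block_large_of_gap/thin_gap_large_of_block.
Qed.

End ThinLarge.

Lemma sqr_leq_exp2 m : m * m <= 2 ^ m.+1.
Proof. by elim: m => // m IH; have := ltn_expl m (isT : 1 < 2); rewrite !expnS in IH *; lia. Qed.

Lemma expn_leq_tower k i m : k <= m -> i <= m -> k ^ i <= 2 ^ 2 ^ m.+1.
Proof.
move=> km; case: i => [_|i im]; first by rewrite expn0 expn_gt0.
apply: (@leq_trans ((2 ^ m) ^ i.+1)).
  by rewrite leq_exp2r // (leq_trans km) // ltnW // ltn_expl.
rewrite -expnM leq_pexp2l // (leq_trans _ (sqr_leq_exp2 m)) //.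
by rewrite leq_mul2l im orbT.
Qed.

Lemma persistent_thin d k X j p : 0 < d -> 0 < k -> 0 < p ->
  large d (thin X (p * k ^ j)) -> persistent d 1 k j (thin X p).
Proof.
move=> d0 k0; elim: j p => [|j IH] p p0; rewrite ?expn0 ?muln1 => lthin.
  by split; [apply: large_neq0 d0 lthin | apply: large_mul1].
apply: (persistent_step (Y := thin X (p * k))).
- exact/thin_dvd/dvdn_mulr.
- have /fset0Pn [x xthin] := large_neq0 d0 lthin; apply/fset0Pn; exists x.
  by move: xthin; apply/fsubsetP/thin_dvd; rewrite expnS mulnA dvdn_mulr.
- move=> y y' yY y'Y yy'; apply: leq_trans (ltn_expl k (isT : 1 < 2)) _.
  by rewrite leq_exp2l //; apply: card_between_thin.
- by apply: IH; rewrite ?muln_gt0 ?p0 // -mulnA -expnS.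
Qed.

Lemma large_tower e A B m : 1 < e -> large e A -> large e B -> fset_lt A B ->
  (forall a, a \in A -> m < a) -> 2 ^ 2 ^ m.+1 < fmax B.
Proof.
move=> e1 lA lB AB mA; have An0 := large_neq0 (ltnW e1) lA.
have maxA : 2 ^ m.+1 <= fmax A by apply: (large_exp_fmax e1 lA).
have maxB : 2 ^ (fmax A).+1 <= fmax B.
  by apply: (large_exp_fmax e1 lB) => // b; apply: AB; apply: fmax_mem.
by apply: leq_trans maxB; rewrite ltn_exp2l // ltnS.
Qed.

Lemma large_thin d k i X : 0 < d -> 0 < k -> large (2 * d + 1) X ->
  (forall x, x \in X -> maxn k (maxn i 2) < x) -> large d (thin X (k ^ i)).
Proof.
case: d => // d _ k0; rewrite mul2n doubleS addn1 => -[m [X1 [mX mmin eX X1m tX1]]] Xbig.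
have /and3P [km im m2] : [&& k < m, i < m & 2 < m] by have := Xbig m mX; lia.
case: m m2 mX mmin eX X1m tX1 km im => [|[|[|m]]] // _ mX mmin eX X1m.
move=> [X_1 [R1 [lX_1 [X_2 [R2 [lX_2 [X_3 [R3 [lX_3 _ X3R3 eR2]]] X2R2 eR1]]] X1R1 eX1]]] km im.
set M := m.+3 in mX mmin eX X1m km im.
have X1X : X1 `<=` X by rewrite eX fsubsetU1.
have [X_1X1 R1X1] : X_1 `<=` X1 /\ R1 `<=` X1 by rewrite eX1 fsubsetUl fsubsetUr.
have X_2R1 : X_2 `<=` R1 by rewrite eR1 fsubsetUl.
have X_3R2 : X_3 `<=` R2 by rewrite eR2 fsubsetUl.
have X_3X1 : X_3 `<=` X1.
  by apply: fsubset_trans X_3R2 (fsubset_trans _ R1X1); rewrite eR1 fsubsetUr.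
have G_X3 v : v \in X_3 -> k ^ i <= v.
  move=> vX3; apply: leq_trans (expn_leq_tower (ltnW km) (ltnW im)) (ltnW _).
  apply: (@ltn_trans (fmax X_2)); last first.
    exact: X2R2 _ _ (fmax_mem (large_neq0 (e := d.*2.+2) isT lX_2)) (fsubsetP X_3R2 _ vX3).
  apply: (large_tower (e := d.*2.+2)) lX_1 lX_2 _ _ => // [a b aX_1 bX_2|a /(fsubsetP X_1X1)].
    exact: X1R1 aX_1 (fsubsetP X_2R1 _ bX_2).
  exact: X1m.
have cX_3 : convex X X_3.
  have cX1 : convex X X1 by apply: (convexU1 (m := M)); rewrite -?eX.
  have cR1 : convex X R1 by apply: (convexUr (A := X_1)); rewrite -?eX1.
  have cR2 : convex X R2 by apply: (convexUr (A := X_2)); rewrite -?eR1.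
  by apply: (convexUl (B := R3)); rewrite -?eR2.
have G0 : 0 < k ^ i by rewrite expn_gt0 k0.
have [Z [ZX_3 Zthin tZ]] := @thin_gap_large_all X (k ^ i) G0 d M X_3 (fsubset_trans X_3X1 X1X)
  cX_3 G_X3 isT (fun v vX3 => X1m v (fsubsetP X_3X1 _ vX3)) lX_3.
apply: (large_superset (Z := M |` Z)) => //.
- by apply: large_fsetU1 tZ => z /(fsubsetP (fsubset_trans ZX_3 X_3X1)) /X1m.
- by rewrite fsubUset fsub1set Zthin fset_min_thin.
- by move=> x /(fsubsetP (thin_subset _ _)) /Xbig; apply: leq_ltn_trans.
Qed.

Theorem corollary2p12 (d k i : nat) (X : {fset nat}) :
  0 < d -> 1 <= k ->
  large (2 * d + 1) X ->
  (forall x, x \in X -> maxn k (maxn i 2) < x) ->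
  persistent d 1 k i X.
Proof.
move=> d0 k0 lX Xbig; rewrite -(thin1 X).
by apply: persistent_thin; rewrite ?mul1n //; apply: large_thin.
Qed.
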